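(* Let $T$ be a torus and $X$ a finite $T$-CW complex. For each $(t,x)\in\mathcal X^+\times\mathfrak t_{\mathbb C}$ we have an equality \[ L^2(S^1\wedge X_+)^{t,x}=S^1\wedge L^2X^{t,x}_+ \] of subsets of $L^2(S^1\wedge X_+)$.
   Context: $\mathbb T=\mathbb R/\mathbb Z$, $T$ torus, $\check T=\mathrm{Hom}(\mathbb T,T)$, $\mathfrak t_{\mathbb C}=\check T\otimes\mathbb C$. $\mathcal X^+=\{(t_1,t_2)\in\mathbb C^2:\mathbb Rt_1+\mathbb Rt_2=\mathbb C,\ \mathrm{Im}(t_1/t_2)>0\}$. For a $T$-space $Z$, $L^2Z=\mathrm{Map}(\mathbb T^2,Z)$ with $\mathbb T^2\times T$ acting by $((r,u)\cdot\gamma)(s)=u\cdot\gamma(s-r)$. $T(t,x)$ is the intersection of all closed subgroups $K\subset\mathbb T^2\times T$ with $(t,x)\in\mathrm{Lie}(K)\otimes\mathbb C\subset\mathbb C^2\times\mathfrak t_{\mathbb C}$, and $W^{t,x}$ denotes the $T(t,x)$-fixed subspace of a $\mathbb T^2\times T$-space $W$. $S^1$ has the trivial $T$-action, $X_+=X\sqcup\{\mathrm{pt}\}$ with $T$-fixed basepoint, and $S^1\wedge X_+$ is pointed. The set $S^1\wedge L^2X^{t,x}_+$ is regarded as a subset of $L^2(S^1\wedge X_+)$ via $[z,\gamma]\mapsto(s\mapsto[z,\gamma(s)])$, the basepoint going to the constant loop at the basepoint. *)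

From HB Require Import structures.
From mathcomp Require Import all_boot all_order all_algebra generic_quotient.
From mathcomp Require Import all_classical all_reals all_analysis.
From mathcomp Require Import complex.
Import numFieldNormedType.Exports.
Import Order.TTheory GRing.Theory Num.Theory.

Set Implicit Arguments.
Unset Strict Implicit.
Unset Printing Implicit Defensive.

Local Open Scope ring_scope.
Local Open Scope classical_set_scope.
Local Open Scope quotient_scope.

(* Conventions.  The rank-n torus T = R^n / Z^n is modelled through its      *)
(* universal cover: a T-action is an action of the additive group R^n on    *)
(* which the lattice Z^n acts trivially; a closed subgroup of a torus is a   *)
(* closed subgroup of R^n containing Z^n (its preimage); the exponential map *)
(* is the projection, so Lie(K) = {v | forall s, s v in K}.  Loops           *)
(* T^2 -> Z are the continuous Z^2-periodic maps R^2 -> Z.  With the         *)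
(* standard basis, check T = Z^n and t_C = C^n.                              *)

Section Defs.
Variable R : realType.

Definition lattice_vec (n : nat) (v : 'rV[R]_n) : Prop :=
  forall i, v ord0 i \is a Num.int.

Definition circ_rel' (a b : R) : bool := (a - b) \is a Num.int.

Lemma circ_rel_refl : reflexive circ_rel'.
Proof. by move=> a; rewrite /circ_rel' subrr rpred0. Qed.

Lemma circ_rel_sym : symmetric circ_rel'.
Proof.
move=> a b; apply/idP/idP; rewrite /circ_rel' => h;
  by rewrite -opprB rpredN.
Qed.

Lemma circ_rel_trans : transitive circ_rel'.
Proof.
move=> b a c hab hbc; rewrite /circ_rel'.
have -> : a - c = (a - b) + (b - c) by rewrite addrA subrK.
by rewrite rpredD.
Qed.

Definition circ_rel := EquivRel circ_rel' circ_rel_refl circ_rel_sym circ_rel_trans.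

Definition circ := {eq_quot circ_rel}.
HB.instance Definition _ := Topological.copy circ (quotient_topology circ).
HB.instance Definition _ := Quotient.on circ.

Definition circ0 : circ := \pi_circ 0.

End Defs.

(* ---------------- X_+ : X with a disjoint (isolated) basepoint ----------- *)
Definition plus (X : Type) := option X.

Section Plus.
Variable X : topologicalType.
HB.instance Definition _ := Choice.copy (plus X) (option X).

Definition plus_open (U : set (plus X)) := open (Some @^-1` U : set X).

Program Definition plus_topologicalType_mixin :=
  @isOpenTopological.Build (plus X) plus_open _ _ _.
Next Obligation. by rewrite /plus_open preimage_setT; exact: openT. Qed.
Next Obligation. by move=> ? ? ? ?; exact: openI. Qed.
Next Obligation. by move=> I f ofi; apply: bigcup_open => i _; exact: ofi. Qed.
HB.instance Definition _ := plus_topologicalType_mixin.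
End Plus.

Section Smash.
Variable R : realType.
Variable X : topologicalType.

Definition smash_base_type := (circ R * plus X)%type.

(* points of the wedge S^1 \/ X_+ inside S^1 x X_+ *)
Definition collapsed (p : smash_base_type) : bool :=
  (p.1 == circ0 R) || (p.2 == None).

Definition smash_rel' (p q : smash_base_type) : bool :=
  (p == q) || (collapsed p && collapsed q).

Lemma smash_rel_refl : reflexive smash_rel'.
Proof. by move=> p; rewrite /smash_rel' eqxx. Qed.

Lemma smash_rel_sym : symmetric smash_rel'.
Proof. by move=> p q; rewrite /smash_rel' eq_sym andbC. Qed.

Lemma smash_rel_trans : transitive smash_rel'.
Proof.
move=> q p r; rewrite /smash_rel'.
case/orP=> [/eqP -> //|/andP[cp cq]].
case/orP=> [/eqP <-|/andP[_ cr]]; first by rewrite cp cq orbT.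
by rewrite cp cr orbT.
Qed.

Definition smash_rel :=
  EquivRel smash_rel' smash_rel_refl smash_rel_sym smash_rel_trans.

Definition smash := {eq_quot smash_rel}.
HB.instance Definition _ := Topological.copy smash (quotient_topology smash).
HB.instance Definition _ := Quotient.on smash.

Definition smash_pt (z : circ R) (y : plus X) : smash := \pi_smash (z, y).

Definition smash_base : smash := smash_pt (circ0 R) None.

Definition smash_act (n : nat) (act : 'rV[R]_n -> X -> X)
  (u : 'rV[R]_n) (q : smash) : smash :=
  smash_pt (repr q).1 (omap (act u) (repr q).2).

End Smash.

Section TSpaces.
Variable R : realType.
Variable n : nat.

Definition Taction (X : topologicalType) (act : 'rV[R]_n -> X -> X) : Prop :=
  [/\ continuous (fun p : ('rV[R]_n * X)%type => act p.1 p.2),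
      (forall x, act 0 x = x),
      (forall u v x, act (u + v) x = act u (act v x)) &
      (forall m x, lattice_vec m -> act m x = x)].

Definition torus_closed_subgroup (H : set 'rV[R]_n) : Prop :=
  [/\ closed H,
      (forall a b, H a -> H b -> H (a - b)) &
      (forall m, lattice_vec m -> H m)].

Definition sqnorm (k : nat) (d : 'rV[R]_k) : R := \sum_(i < k) d ord0 i ^+ 2.

(* an equivariant cell  T/H x D^k  with characteristic map
   (T/H x D^k -> X) given as a map on R^n x D^k, D^k the unit ball of R^k *)
Record Tcell (X : Type) := TCell {
  cdim : nat;
  cgrp : set 'rV[R]_n;
  cmap : ('rV[R]_n * 'rV[R]_cdim)%type -> X }.
Arguments cmap {X} _ _.
Arguments cdim {X} _.
Arguments cgrp {X} _ _.

Definition celldom (X : Type) (cl : Tcell X) :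
  set ('rV[R]_n * 'rV[R]_(cdim cl))%type := [set p | sqnorm p.2 <= 1].
Arguments celldom {X} cl.

Definition finite_TCW (X : topologicalType) (act : 'rV[R]_n -> X -> X) : Prop :=
  [/\ Taction act, hausdorff_space X &
  exists (N : nat) (c : 'I_N -> Tcell X),
   (forall i, torus_closed_subgroup (cgrp (c i))) /\
   (forall i, {within celldom (c i), continuous (cmap (c i))}) /\
   (forall i u (p : ('rV[R]_n * 'rV[R]_(cdim (c i)))%type), sqnorm p.2 <= 1 ->
     cmap (c i) (u + p.1, p.2) = act u (cmap (c i) p)) /\
   (forall i h (p : ('rV[R]_n * 'rV[R]_(cdim (c i)))%type), cgrp (c i) h ->
     sqnorm p.2 <= 1 -> cmap (c i) (p.1 + h, p.2) = cmap (c i) p) /\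
   (* the boundary T/H x S^(k-1) is attached to the (k-1)-skeleton *)
   (forall i (p : ('rV[R]_n * 'rV[R]_(cdim (c i)))%type), sqnorm p.2 = 1 ->
     exists (j : 'I_N) (q : ('rV[R]_n * 'rV[R]_(cdim (c j)))%type),
       [/\ (cdim (c j) < cdim (c i))%N, sqnorm q.2 <= 1 &
           cmap (c j) q = cmap (c i) p]) /\
   (forall x : X, exists (i : 'I_N) (p : ('rV[R]_n * 'rV[R]_(cdim (c i)))%type),
     sqnorm p.2 < 1 /\ cmap (c i) p = x) /\
   (forall i j (p : ('rV[R]_n * 'rV[R]_(cdim (c i)))%type)
              (q : ('rV[R]_n * 'rV[R]_(cdim (c j)))%type),
     sqnorm p.2 < 1 -> sqnorm q.2 < 1 -> cmap (c i) p = cmap (c j) q -> i = j) /\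
   (forall i (p q : ('rV[R]_n * 'rV[R]_(cdim (c i)))%type),
     sqnorm p.2 < 1 -> sqnorm q.2 < 1 -> cmap (c i) p = cmap (c i) q ->
     p.2 = q.2 /\ cgrp (c i) (p.1 - q.1)) /\
   (* ... and X carries the weak (quotient) topology *)
   (forall A : set X, closed A <->
     (forall i, exists C : set ('rV[R]_n * 'rV[R]_(cdim (c i)))%type,
        closed C /\
        [set p | sqnorm p.2 <= 1 /\ A (cmap (c i) p)] =
        [set p | sqnorm p.2 <= 1 /\ C p]))].

Definition big_closed_subgroup (K : set ('rV[R]_2 * 'rV[R]_n)%type) : Prop :=
  [/\ closed K,
      (forall a b, K a -> K b -> K (a.1 - b.1, a.2 - b.2)) &
      (forall m : ('rV[R]_2 * 'rV[R]_n)%type,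
          lattice_vec m.1 -> lattice_vec m.2 -> K m)].

Definition LieK (K : set ('rV[R]_2 * 'rV[R]_n)%type) :
  set ('rV[R]_2 * 'rV[R]_n)%type :=
  [set v | forall s : R, K (s *: v.1, s *: v.2)].

Definition in_LieC (K : set ('rV[R]_2 * 'rV[R]_n)%type)
  (t : (R[i] * R[i])%type) (x : 'rV[R[i]]_n) : Prop :=
  exists a b, [/\ LieK K a, LieK K b,
    t.1 = Complex (a.1 ord0 ord0) (b.1 ord0 ord0),
    t.2 = Complex (a.1 ord0 ord_max) (b.1 ord0 ord_max) &
    forall l, x ord0 l = Complex (a.2 ord0 l) (b.2 ord0 l)].

Definition Ttx (t : (R[i] * R[i])%type) (x : 'rV[R[i]]_n) :
  set ('rV[R]_2 * 'rV[R]_n)%type :=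
  [set k | forall K, big_closed_subgroup K -> in_LieC K t x -> K k].

Definition L2 (Z : topologicalType) : set ('rV[R]_2 -> Z) :=
  [set g | continuous g /\ forall s m, lattice_vec m -> g (s + m) = g s].

Definition L2act (Z : Type) (act : 'rV[R]_n -> Z -> Z)
  (k : ('rV[R]_2 * 'rV[R]_n)%type) (g : 'rV[R]_2 -> Z) : 'rV[R]_2 -> Z :=
  fun s => act k.2 (g (s - k.1)).

Definition L2fixed (Z : topologicalType) (act : 'rV[R]_n -> Z -> Z)
  (t : (R[i] * R[i])%type) (x : 'rV[R[i]]_n) : set ('rV[R]_2 -> Z) :=
  [set g | L2 g /\ forall k, Ttx t x k -> L2act act k g = g].

End TSpaces.

Definition Xplus (R : realType) (t : (R[i] * R[i])%type) : Prop :=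
  (forall z : R[i], exists a b : R,
      z = Complex a 0 * t.1 + Complex b 0 * t.2) /\
  0 < complex.Im (t.1 / t.2).

From HB Require Import structures.
From mathcomp Require Import all_boot all_order all_algebra generic_quotient.
From mathcomp Require Import all_classical all_reals all_analysis.
From mathcomp Require Import complex.
From mathcomp Require Import ring zify.
Import numFieldNormedType.Exports.
Import Order.TTheory GRing.Theory Num.Theory.

Set Implicit Arguments.
Unset Strict Implicit.
Unset Printing Implicit Defensive.

Local Open Scope ring_scope.
Local Open Scope classical_set_scope.
Local Open Scope quotient_scope.

(* For t in X^+ the real and imaginary parts of t span R^2, so T(t,x) maps
   onto the whole of T^2: a T(t,x)-fixed double loop G therefore satisfies
   G(r) = u . G(0) for some u in T, i.e. it lies in one T-orbit.  Since T acts
   trivially on the S^1 coordinate, a fixed loop in S^1 /\ X_+ is either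
   constant at the basepoint or of the form s |-> [z, g(s)] for one z away
   from the basepoint; and for such z the map y |-> [z, y] is a
   T-equivariant embedding of X, so g is again a fixed double loop. *)

Lemma Xplus_det_neq0 (R : realType) (x1 y1 x2 y2 : R) :
  Xplus (Complex x1 y1, Complex x2 y2) -> x1 * y2 - x2 * y1 != 0.
Proof.
move=> [span _].
have [a [b]] := span 1; have [c [d]] := span (Complex 0 1).
move=> /= -[re_i im_i] [re_1 im_1].
rewrite !(mul0r, subr0, addr0) in re_i im_i re_1 im_1.
have : (x1 * y2 - x2 * y1) * (a * d - b * c) = 1.
  have -> : (x1 * y2 - x2 * y1) * (a * d - b * c) =
      (a * x1 + b * x2) * (c * y1 + d * y2)
      - (c * x1 + d * x2) * (a * y1 + b * y2) by ring.
  by rewrite -re_i -im_i -re_1 -im_1 mul1r mul0r subr0.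
by apply: contra_eq_neq => ->; rewrite mul0r eq_sym oner_neq0.
Qed.

Lemma row2_eq (T : Type) (u v : 'rV[T]_2) :
  u ord0 ord0 = v ord0 ord0 -> u ord0 ord_max = v ord0 ord_max -> u = v.
Proof.
move=> e0 e1; apply/matrixP => i [[|[|j]] lt_j2]; rewrite (ord1 i).
- by rewrite (_ : Ordinal lt_j2 = ord0) //; apply: val_inj.
- by rewrite (_ : Ordinal lt_j2 = ord_max) //; apply: val_inj.
- by [].
Qed.

(* With (t, x) = a + i b and a, b in Lie(K), every K in the intersection
   contains s a + s' b; as Re t and Im t span R^2, Cramer's rule gives s, s'
   whose first component is any prescribed r. *)
Lemma Ttx_proj_surj (R : realType) n (t : (R[i] * R[i])%type)
    (x : 'rV[R[i]]_n) :
  Xplus t -> forall r : 'rV[R]_2, exists k, Ttx t x k /\ k.1 = r.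
Proof.
case: t => [[x1 y1] [x2 y2]] ht r.
have := Xplus_det_neq0 ht; set D := x1 * y2 - x2 * y1 => D_neq0.
pose A : 'rV[R]_2 := \row_(i < 2) (if i == ord0 then x1 else x2).
pose B : 'rV[R]_2 := \row_(i < 2) (if i == ord0 then y1 else y2).
pose XA : 'rV[R]_n := \row_(l < n) complex.Re (x ord0 l).
pose XB : 'rV[R]_n := \row_(l < n) complex.Im (x ord0 l).
pose s := (r ord0 ord0 * y2 - r ord0 ord_max * y1) / D.
pose s' := (x1 * r ord0 ord_max - x2 * r ord0 ord0) / D.
exists (s *: A + s' *: B, s *: XA + s' *: XB); split; last first.
  by apply: row2_eq; rewrite !mxE /= /s /s' /D; field.
move=> K [_ subK _] [a [b [La Lb [ea1 eb1] [ea2 eb2] ex]]].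
have -> : A = a.1 by apply: row2_eq; rewrite mxE.
have -> : B = b.1 by apply: row2_eq; rewrite mxE.
have -> : XA = a.2 by apply/matrixP => i l; rewrite (ord1 i) mxE ex.
have -> : XB = b.2 by apply/matrixP => i l; rewrite (ord1 i) mxE ex.
by have := subK _ _ (La s) (Lb (- s')); rewrite /= !scaleNr !opprK.
Qed.

Lemma L2fixed_orbit (R : realType) n (Z : topologicalType)
    (act : 'rV[R]_n -> Z -> Z) t x (G : 'rV[R]_2 -> Z) :
  Xplus t -> L2fixed act t x G -> forall r, exists u, G r = act u (G 0).
Proof.
move=> ht [_ fixG] r; have [k [Tk <-]] := Ttx_proj_surj x ht r.
exists k.2; have /(congr1 (fun f => f k.1)) := fixG k Tk.
by rewrite /L2act subrr.
Qed.

Lemma open_setX (U V : topologicalType) (A : set U) (B : set V) :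
  open A -> open B -> open (A `*` B).
Proof.
rewrite !openE => oA oB [a b] [Aa Bb].
by exists (A, B) => //; split; [exact: oA | exact: oB].
Qed.

Lemma open_notin_int (R : realType) : open (~` [set a : R | a \is a Num.int]).
Proof.
rewrite openE => a /= a_notin_int.
have a_in : (Num.floor a)%:~R < a < (Num.floor a + 1)%:~R.
  rewrite floorD1_gt andbT lt_neqAle floor_le andbT.
  by apply: contra_notN a_notin_int => /eqP <-; exact: intr_int.
have := @itv_open _ R (Num.floor a)%:~R (Num.floor a + 1)%:~R.
rewrite openE => /(_ a); rewrite /= in_itv /= => /(_ a_in).
apply: filterS => c; rewrite /= in_itv /= => /andP[lt_c lt_c'] /intrP[m em].
by move: lt_c lt_c'; rewrite em !ltr_int; lia.
Qed.

Lemma circ_neq0_open (R : realType) : open [set z : circ R | z != circ0 R].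
Proof.
rewrite /open /= /quotient_open.
suff -> : \pi_(circ R) @^-1` [set z | z != circ0 R] =
          ~` [set a : R | a \is a Num.int] by exact: open_notin_int.
apply/seteqP; split => a /=.
  by move=> /eqP neq0 a_int; apply/neq0/eqmodP; rewrite /= /circ_rel' subr0.
by move=> a_notin_int; apply/eqP => /eqmodP; rewrite /= /circ_rel' subr0.
Qed.

Lemma Some_continuous (X : topologicalType) : continuous (Some : X -> plus X).
Proof. by apply/continuousP => A. Qed.

Lemma collapsed_omap (R : realType) (X Y : topologicalType) (f : X -> Y)
    (z : circ R) (y : plus X) :
  collapsed (z, omap f y : plus Y) = collapsed (z, y).
Proof. by case: y. Qed.

Section SmashPoints.
Variables (R : realType) (X : topologicalType).

Lemma smash_relP (p q : smash_base_type R X) :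
  reflect (\pi_(smash R X) p = \pi_(smash R X) q) (smash_rel' p q).
Proof. exact: eqmodP. Qed.

Lemma smash_pt_collapsed (z : circ R) (y : plus X) :
  collapsed (z, y) -> smash_pt z y = smash_base R X.
Proof.
move=> zy_coll; apply/smash_relP.
by rewrite /smash_rel' zy_coll /collapsed /= eqxx orbT.
Qed.

Lemma smash_pt_inj (z z' : circ R) (y y' : X) : z != circ0 R ->
  smash_pt z (Some y) = smash_pt z' (Some y') -> z = z' /\ y = y'.
Proof.
move=> z_neq0 /smash_relP; rewrite /smash_rel' /collapsed /= (negbTE z_neq0) /=.
by rewrite orbF => /eqP[-> ->].
Qed.

Lemma smash_cases (q : smash R X) :
  q = smash_base R X \/ exists z y, z != circ0 R /\ q = smash_pt z (Some y).
Proof.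
rewrite -[q]reprK; case: (repr q) => z [y|]; last first.
  by left; apply: smash_pt_collapsed; rewrite /collapsed orbT.
have [->|z_neq0] := eqVneq z (circ0 R).
  by left; apply: smash_pt_collapsed; rewrite /collapsed eqxx.
by right; exists z, y.
Qed.

Lemma smash_actE n (act : 'rV[R]_n -> X -> X) u (z : circ R) (y : plus X) :
  smash_act act u (smash_pt z y) = smash_pt z (omap (act u) y).
Proof.
rewrite /smash_act.
have /orP[/eqP -> // | /andP[repr_coll zy_coll]] :
    smash_rel' (repr (smash_pt z y)) (z, y) by apply/smash_relP; rewrite reprK.
move: repr_coll; case: (repr _) => z' y' repr_coll.
by rewrite !smash_pt_collapsed // collapsed_omap.
Qed.

Lemma smash_pt_continuous (T : topologicalType) (z : circ R) (g : T -> X) :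
  continuous g -> continuous (fun s => smash_pt z (Some (g s))).
Proof.
move=> g_cont s; apply: continuous_comp; last exact: pi_continuous.
exact: cvg_pair (cvg_cst z) (continuous_comp (g_cont s) (@Some_continuous X _)).
Qed.

Lemma smash_pt_continuous_inv (T : topologicalType) (z : circ R) (g : T -> X) :
  z != circ0 R -> continuous (fun s => smash_pt z (Some (g s))) -> continuous g.
Proof.
move=> z_neq0 /continuousP G_cont; apply/continuousP => U oU.
pose V := [set q : smash R X | exists z' y,
             [/\ z' != circ0 R, U y & q = smash_pt z' (Some y)]].
have -> : g @^-1` U = (fun s => smash_pt z (Some (g s))) @^-1` V.
  apply/seteqP; split => s /=; first by exists z, (g s).
  by move=> [z' [y [_ Uy /smash_pt_inj[] // _ ->]]].
apply: G_cont; rewrite /open /= /quotient_open.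
suff -> : \pi_(smash R X) @^-1` V =
    [set z' | z' != circ0 R] `*` [set Some y | y in U].
  apply: open_setX; first exact: circ_neq0_open.
  rewrite /open /= /plus_open (_ : Some @^-1` _ = U) //.
  by apply/seteqP; split => [y [y' Uy' [<-]] | y Uy] //; exists y.
apply/seteqP; split => -[z' y'] /=.
  move=> [z'' [y [z''_neq0 Uy /esym /smash_relP]]].
  rewrite /smash_rel' /collapsed /= (negbTE z''_neq0) orbF => /eqP[<- <-].
  by split => //; exists y.
by move=> [z'_neq0 [y Uy <-]]; exists z', y.
Qed.

End SmashPoints.

Section SmashLoops.
Variables (R : realType) (n : nat) (X : topologicalType).
Variables (act : 'rV[R]_n -> X -> X) (t : (R[i] * R[i])%type) (x : 'rV[R[i]]_n).

Lemma L2act_smash_pt k (z : circ R) (g : 'rV[R]_2 -> X) :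
  L2act (smash_act act) k (fun s => smash_pt z (Some (g s))) =
  (fun s => smash_pt z (Some (L2act act k g s))).
Proof. by apply/funext => s; rewrite /L2act smash_actE. Qed.

Lemma L2fixed_smash_base :
  L2fixed (smash_act act) t x (fun _ => smash_base R X).
Proof.
split; first by split; [exact: cst_continuous | by []].
by move=> k _; apply/funext => s; rewrite /L2act smash_actE.
Qed.

Lemma L2fixed_smash_pt (z : circ R) (g : 'rV[R]_2 -> X) : z != circ0 R ->
  L2fixed (smash_act act) t x (fun s => smash_pt z (Some (g s))) <->
  L2fixed act t x g.
Proof.
move=> z_neq0; split => [[[G_cont G_per] G_fix] | [[g_cont g_per] g_fix]].
  split; first split.
  - exact: smash_pt_continuous_inv z_neq0 G_cont.
  - by move=> s m lm; have /(smash_pt_inj z_neq0)[] := G_per s m lm.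
  move=> k Tk; apply/funext => s; have := G_fix k Tk.
  by rewrite L2act_smash_pt => /(congr1 (fun f => f s))/(smash_pt_inj z_neq0)[].
split; first split.
- exact: smash_pt_continuous.
- by move=> s m lm; rewrite g_per.
by move=> k Tk; rewrite L2act_smash_pt g_fix.
Qed.

End SmashLoops.

Theorem mainTheorem17 (R : realType) (n : nat) (X : topologicalType)
    (act : 'rV[R]_n -> X -> X) (hX : finite_TCW act)
    (t : (R[i] * R[i])%type) (x : 'rV[R[i]]_n) (ht : Xplus t) :
  L2fixed (smash_act act) t x =
  [set G : 'rV[R]_2 -> smash R X |
     G = (fun _ => smash_base R X) \/
     exists (z : circ R) (g : 'rV[R]_2 -> X),
       L2fixed act t x g /\ G = (fun s => smash_pt z (Some (g s)))].
Proof.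
rewrite eqEsubset; split => [G G_fix | G [-> | [z [g [g_fix ->]]]]].
- have orbit := L2fixed_orbit ht G_fix.
  have [G0 | [z [y [z_neq0 G0]]]] := smash_cases (G 0).
    left; apply/funext => r; have [u ->] := orbit r.
    by rewrite G0 smash_actE.
  have /choice[g Gg] : forall r, exists y', G r = smash_pt z (Some y').
    by move=> r; have [u ->] := orbit r; rewrite G0 smash_actE; eexists.
  have G_eq : G = fun s => smash_pt z (Some (g s)) by apply/funext.
  by right; exists z, g; rewrite -(L2fixed_smash_pt _ _ _ _ z_neq0) -G_eq.
- exact: L2fixed_smash_base.
- have [-> | z_neq0] := eqVneq z (circ0 R); last by apply/L2fixed_smash_pt.
  rewrite (_ : (fun _ => _) = fun _ => smash_base R X); last first.
    by apply/funext => s; apply: smash_pt_collapsed; rewrite /collapsed eqxx.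
  exact: L2fixed_smash_base.
Qed.
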